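(* Let $\mathcal{B}=(T,\bowtie)$ be a block of homogeneous transactions, let $k$ be the chromatic number of the conflict graph $(T,\bowtie)$, let $c_{\min}:T\to\{1,\dots,k\}$ be a proper vertex coloring with $k$ colors, $T_i=\{tx: c_{\min}(tx)=i\}$, and $\mathcal S_{c_{\min}}=\mathrm{LevelSchedule}(T_1,\dots,T_k)$. Then $\mathrm{Lt}_{\mathbb 1}(\mathcal S_{c_{\min}})=\mathrm{MinLt}_{\mathbb 1}(\mathcal{B})$, i.e., $\mathcal S_{c_{\min}}$ has minimum latency among all valid schedules of $\mathcal{B}$.
   Context: A block consists of a finite set $T$ of transactions with a symmetric irreflexive conflict relation $\bowtie$; the conflict graph is $(T,\bowtie)$. Homogeneous: all transaction lengths are taken to be $1$. A schedule is a set $\mathcal S\subseteq T\times T$ with $(T,\mathcal S)$ acyclic; it is valid if for every pair $tx\bowtie tx'$ there is a directed path in $(T,\mathcal S)$ from $tx$ to $tx'$ or from $tx'$ to $tx$. $\mathrm{Lt}_{\mathbb 1}(\mathcal S)$ is the maximum number of vertices on a directed path in $(T,\mathcal S)$, and $\mathrm{MinLt}_{\mathbb 1}(\mathcal{B})$ is the minimum of $\mathrm{Lt}_{\mathbb 1}(\mathcal S)$ over all valid schedules $\mathcal S$. $\mathrm{LevelSchedule}(B_1,\dots,B_k)$ for an ordered partition of $T$ into conflict-free sets: set $B_0=\emptyset$, $\mathcal S=\emptyset$; for $i=1,\dots,k$ and, for each $i$, for $j=i-1,\dots,0$ (decreasing): let $E=\{(u,v)\in B_j\times B_i: u\bowtie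 v\}$, let $P$ be the set of pairs $(x,y)$ with a directed path from $x$ to $y$ in the current $(T,\mathcal S)$, and set $\mathcal S\leftarrow\mathcal S\cup(E\setminus P)$; output $\mathcal S$. *)

From mathcomp Require Import all_boot.
Set Implicit Arguments. Unset Strict Implicit. Unset Printing Implicit Defensive.

Section Sched.
Variable T : finType.

Definition srel (S : {set T * T}) : rel T := fun x y => (x, y) \in S.

Definition acyclic (S : {set T * T}) : bool :=
  [forall x, forall y, ((x, y) \in S) ==> ~~ connect (srel S) y x].

Definition valid_schedule (conf : rel T) (S : {set T * T}) : bool :=
  acyclic S &&
  [forall x, forall y, conf x y ==> (connect (srel S) x y || connect (srel S) y x)].

Definition is_dpath (S : {set T * T}) (s : seq T) : bool :=
  if s is x :: p then path (srel S) x p else false.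

(* Lt_1(S): maximum number of vertices on a directed path of (T,S).
   (For acyclic S every directed path has at most #|T| vertices.) *)
Definition Lt (S : {set T * T}) : nat :=
  \max_(n < #|T|.+1 | [exists t : n.-tuple T, is_dpath S t]) n.

(* MinLt_1(B): minimum of Lt over all valid schedules
   (#|T| is an upper bound of Lt, used as neutral element). *)
Definition MinLt (conf : rel T) : nat :=
  \big[minn/#|T|]_(S : {set T * T} | valid_schedule conf S) Lt S.

Definition level_step (conf : rel T) (S : {set T * T}) (Bj Bi : {set T})
  : {set T * T} :=
  S :|: [set p | [&& p.1 \in Bj, p.2 \in Bi, conf p.1 p.2
                   & ~~ connect (srel S) p.1 p.2]].

(* LevelSchedule(B_1,...,B_k), blocks given by B : nat -> {set T}
   with B 0 = emptyset; for i = 1..k, for j = i-1 downto 0. *)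
Definition level_schedule (conf : rel T) (B : nat -> {set T}) (k : nat)
  : {set T * T} :=
  foldl (fun S i =>
           foldl (fun S j => level_step conf S (B j) (B i)) S (rev (iota 0 i)))
        set0 (iota 1 k).

(* proper colouring with colours 'I_k (colour i stands for colour i+1) *)
Definition proper_coloring (conf : rel T) (k : nat) (c : T -> 'I_k) : Prop :=
  forall x y, conf x y -> c x != c y.

Definition color_blocks (k : nat) (c : T -> 'I_k) (i : nat) : {set T} :=
  if i is i'.+1 then [set x | nat_of_ord (c x) == i'] else set0.

End Sched.

From mathcomp Require Import all_boot order zify.
Set Implicit Arguments. Unset Strict Implicit. Unset Printing Implicit Defensive.
Import Order.TTheory.

(* Every edge of the level schedule goes from a lower to a higher colour class,
   so along any directed path the colours strictly increase and its latency is
   at most k.  Conversely, in any valid schedule S the height of a vertex (the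
   number of edges of a longest path ending in it) is a proper colouring with
   Lt S colours, because conflicting transactions are joined by a path; hence
   k <= Lt S by minimality of k. *)

Lemma foldl_invariant (A : Type) (B : eqType) (f : A -> B -> A) (P : A -> Prop)
    (s : seq B) (a0 : A) :
  P a0 -> (forall a b, b \in s -> P a -> P (f a b)) -> P (foldl f a0 s).
Proof.
elim: s a0 => //= b s IH a0 Pa0 Pf; apply: IH => [|a b' b's].
  by apply: Pf; rewrite ?mem_head.
by apply: Pf; rewrite inE b's orbT.
Qed.

Lemma foldl_established (A : Type) (B : eqType) (f : A -> B -> A) (P : A -> Prop)
    (s : seq B) (a0 : A) (b0 : B) :
  (forall a b, P a -> P (f a b)) -> (forall a, P (f a b0)) -> b0 \in s ->
  P (foldl f a0 s).
Proof.
move=> Pf Pfb0; elim: s a0 => //= b s IH a0; rewrite inE => /orP [/eqP <-|].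
  by apply: foldl_invariant => // a b' _; apply: Pf.
exact: IH.
Qed.

Section Schedules.
Variable T : finType.
Implicit Types (S : {set T * T}) (conf : rel T).

Lemma connect_srel_subset S S' :
  S \subset S' -> subrel (connect (srel S)) (connect (srel S')).
Proof.
move=> sSS'; apply: connect_sub => x y xy; apply: connect1.
exact: (subsetP sSS').
Qed.

Lemma acyclic_path_uniq S x p : acyclic S -> path (srel S) x p -> uniq (x :: p).
Proof.
move=> acS; elim: p x => [//|y p IH] x /andP [xy yp].
rewrite cons_uniq IH // andbT; apply/negP => /(path_connect yp) yx.
by move: acS => /forallP /(_ x) /forallP /(_ y) /implyP /(_ xy); rewrite yx.
Qed.

Lemma acyclic_path_size S x p : acyclic S -> path (srel S) x p -> size p < #|T|.
Proof.
move=> acS xp; suff: size (x :: p) <= #|T| by [].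
by rewrite -(card_uniqP (acyclic_path_uniq acS xp)) max_card.
Qed.

Lemma path_size_lt_Lt S x p : acyclic S -> path (srel S) x p -> size p < Lt S.
Proof.
move=> acS xp; have szp := acyclic_path_size acS xp.
rewrite /Lt; apply: (@leq_bigmax_cond _ _ (fun n : 'I_#|T|.+1 => nat_of_ord n)
                       (@Ordinal #|T|.+1 (size p).+1 szp)).
by apply/existsP; exists (in_tuple (x :: p)).
Qed.

Lemma Lt_leq S m : (forall x p, path (srel S) x p -> size p < m) -> Lt S <= m.
Proof.
move=> Sm; apply/bigmax_leqP => n /existsP [[[|x p] /= /eqP <-]] //.
exact: Sm.
Qed.

Definition height S (x : T) : nat :=
  \max_(n < #|T| | [exists y, exists t : n.-tuple T,
                      path (srel S) y t && (last y t == x)]) n.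

Lemma path_size_le_height S y p :
  acyclic S -> path (srel S) y p -> size p <= height S (last y p).
Proof.
move=> acS yp; have szp := acyclic_path_size acS yp.
rewrite /height.
apply: (@leq_bigmax_cond _ _ (fun n : 'I_#|T| => nat_of_ord n) (Ordinal szp)).
by apply/existsP; exists y; apply/existsP; exists (in_tuple p); rewrite /= yp eqxx.
Qed.

Lemma height_lt_Lt S x : acyclic S -> height S x < Lt S.
Proof.
move=> acS; have pos_Lt : 0 < Lt S by apply: (@path_size_lt_Lt _ x [::]).
suff: height S x <= (Lt S).-1 by lia.
apply/bigmax_leqP => n /existsP [y /existsP [t /andP [yt _]]].
by have := path_size_lt_Lt acS yt; rewrite size_tuple; lia.
Qed.

Lemma height_connect_lt S x y :
  acyclic S -> connect (srel S) x y -> x != y -> height S x < height S y.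
Proof.
move=> acS /connectP [p xp ->] neq_x_last.
have {neq_x_last} szp : 0 < size p by case: p xp neq_x_last; rewrite //= eqxx.
have := path_size_le_height acS xp.
suff: height S x <= height S (last x p) - size p by lia.
apply/bigmax_leqP => n /existsP [z /existsP [t /andP [zt /eqP tx]]].
have ztp : path (srel S) z (t ++ p) by rewrite cat_path zt tx xp.
have := path_size_le_height acS ztp.
by rewrite last_cat tx size_cat size_tuple; lia.
Qed.

Lemma valid_schedule_coloring conf S :
  irreflexive conf -> valid_schedule conf S ->
  exists c : T -> 'I_(Lt S), proper_coloring conf c.
Proof.
move=> irr /andP [acS /forallP conn].
exists (fun x => Ordinal (height_lt_Lt x acS)) => x y xy.
have neq_xy : x != y by apply: contraTneq xy => ->; rewrite irr.
apply/negP => /eqP /(congr1 val) /= eq_h.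
move: (conn x) => /forallP /(_ y) /implyP /(_ xy) /orP [] /height_connect_lt.
  by move=> /(_ acS neq_xy); rewrite eq_h ltnn.
by move=> /(_ acS); rewrite eq_sym eq_h ltnn => /(_ neq_xy).
Qed.

Lemma enum_rank_proper_coloring conf :
  irreflexive conf -> proper_coloring conf (@enum_rank T).
Proof.
move=> irr x y xy; rewrite (inj_eq enum_rank_inj).
by apply: contraTneq xy => ->; rewrite irr.
Qed.

Lemma MinLt_le conf S : valid_schedule conf S -> MinLt conf <= Lt S.
Proof.
by move=> vS; rewrite /MinLt -minEnat; apply: (@bigmin_le_cond _ nat _ #|T| S).
Qed.

Lemma leq_MinLt conf m :
  m <= #|T| -> (forall S, valid_schedule conf S -> m <= Lt S) -> m <= MinLt conf.
Proof. by move=> mT mS; rewrite /MinLt -minEnat; apply: (@le_bigmin _ nat). Qed.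

Section ColorIncreasing.
Variables (k : nat) (c : T -> 'I_k) (S : {set T * T}).
Hypothesis color_lt : forall x y, (x, y) \in S -> c x < c y.

Lemma path_color_lt x p :
  path (srel S) x p -> path ltn (c x) [seq val (c z) | z <- p].
Proof.
by rewrite (path_map (f := fun z => val (c z))); apply: sub_path => y z; apply: color_lt.
Qed.

Lemma connect_color_leq x y : connect (srel S) x y -> c x <= c y.
Proof.
move=> /connectP [p xp ->]; elim: p x xp => //= z p IH x /andP [xz zp].
exact: leq_trans (ltnW (color_lt xz)) (IH _ zp).
Qed.

Lemma acyclic_color_increasing : acyclic S.
Proof.
apply/forallP => x; apply/forallP => y; apply/implyP => /color_lt xy.
by apply/negP => /connect_color_leq; rewrite leqNgt xy.
Qed.

Lemma Lt_color_increasing : Lt S <= k.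
Proof.
apply: Lt_leq => x p /path_color_lt xp.
have: uniq (val (c x) :: [seq val (c z) | z <- p]).
  by apply: (sorted_uniq ltn_trans ltnn); exact: xp.
move=> /(@uniq_leq_size _ _ (iota 0 k)); rewrite size_iota /= size_map; apply.
by move=> _ /predU1P [->|/mapP [z _ ->]]; rewrite mem_iota ltn_ord.
Qed.

End ColorIncreasing.

Lemma level_step_subset conf S Bj Bi : S \subset level_step conf S Bj Bi.
Proof. exact: subsetUl. Qed.

Lemma level_step_connect conf S (Bj Bi : {set T}) x y :
  x \in Bj -> y \in Bi -> conf x y -> connect (srel (level_step conf S Bj Bi)) x y.
Proof.
move=> xBj yBi xy; have [Sxy|nSxy] := boolP (connect (srel S) x y).
  exact: connect_srel_subset (level_step_subset _ _ _ _) _ _ Sxy.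
by apply: connect1; rewrite /srel !inE /= xBj yBi xy nSxy orbT.
Qed.

Section LevelSchedule.
Variables (conf : rel T) (k : nat) (c : T -> 'I_k).
Let L := level_schedule conf (color_blocks c) k.

Lemma level_schedule_color_lt x y : (x, y) \in L -> c x < c y.
Proof.
pose P (S : {set T * T}) := forall x y, (x, y) \in S -> c x < c y.
move: x y; apply: (foldl_invariant (P := P)) => [x y|S i _ PS]; first by rewrite inE.
apply: foldl_invariant => // S' j; rewrite mem_rev mem_iota => /andP [_ lt_ji] PS' x y.
rewrite inE => /orP [/PS' //|]; rewrite inE /=.
case: j lt_ji => [|j] lt_ji; first by rewrite /color_blocks inE.
case: i lt_ji => [//|i] lt_ji; rewrite /color_blocks !inE.
by case/and4P => /eqP -> /eqP -> _ _.
Qed.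

Lemma level_schedule_connect x y :
  conf x y -> c x < c y -> connect (srel L) x y.
Proof.
move=> xy lt_cxy; pose P (S : {set T * T}) := connect (srel S) x y.
have P_step S Bj Bi : P S -> P (level_step conf S Bj Bi).
  exact: connect_srel_subset (level_step_subset _ _ _ _) _ _.
apply: (@foldl_established _ _ _ P _ _ (c y).+1) => [S i PS||].
- by apply: (foldl_invariant (P := P)) => // S' j _; apply: P_step.
- move=> S; apply: (@foldl_established _ _ _ P _ _ (c x).+1) => [S' j||].
  + exact: P_step.
  + by move=> S'; apply: level_step_connect; rewrite /color_blocks ?inE.
  + by rewrite mem_rev mem_iota ltnS.
- by rewrite mem_iota add1n !ltnS ltn_ord.
Qed.

Lemma level_schedule_valid :
  symmetric conf -> proper_coloring conf c -> valid_schedule conf L.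
Proof.
move=> sym proper; rewrite /valid_schedule.
rewrite (acyclic_color_increasing level_schedule_color_lt) /=.
apply/forallP => x; apply/forallP => y; apply/implyP => xy.
move: (proper _ _ xy); rewrite neq_ltn => /orP [lt_cxy|lt_cyx].
  by rewrite level_schedule_connect.
by rewrite (level_schedule_connect (x := y)) ?orbT // sym.
Qed.

End LevelSchedule.

End Schedules.

Theorem theorem4 (T : finType) (conf : rel T)
  (Hsym : symmetric conf) (Hirr : irreflexive conf)
  (k : nat) (c : T -> 'I_k)
  (Hc : proper_coloring conf c)
  (Hchi : forall (k' : nat) (c' : T -> 'I_k'), proper_coloring conf c' -> k <= k') :
  valid_schedule conf (level_schedule conf (color_blocks c) k) /\
  Lt (level_schedule conf (color_blocks c) k) = MinLt conf.
Proof.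
have valid := level_schedule_valid Hsym Hc.
have Lt_le_k := Lt_color_increasing (@level_schedule_color_lt T conf k c).
split=> //; apply/eqP; rewrite eqn_leq MinLt_le // andbT.
apply: leq_trans Lt_le_k _.
apply: leq_MinLt => [|S /(valid_schedule_coloring Hirr) [c' /Hchi //]].
exact: Hchi (enum_rank_proper_coloring Hirr).
Qed.
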